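(* Let $U=\mathbb{C}^m$, $V=\mathbb{C}^2$, $W=\mathbb{C}^2$ with bases $\{u_i\}$, $\{v_j\}$, $\{w_k\}$ and dual bases $\{u^i\}$, $\{v^j\}$, $\{w^k\}$, and set $x^i_j=u^i\otimes v_j\in U^*\otimes V$, $y^j_k=v^j\otimes w_k\in V^*\otimes W$, $z^k_i=w^k\otimes u_i\in W^*\otimes U$. Let $$M_{\langle m,2,2\rangle}=\sum_{k=1}^{2}\sum_{j=1}^{2}\sum_{i=1}^{m} x^i_j\otimes y^j_k\otimes z^k_i$$ and $$T_{BCLRS,m}=M_{\langle m,2,2\rangle}-x^1_1\otimes(y^1_1\otimes z^1_1+y^1_2\otimes z^2_1)\in A\otimes B\otimes C,$$ where $A\subset U^*\otimes V$ is the $(2m-1)$-dimensional span of all $x^i_j$ with $(i,j)\neq(1,1)$, $B=V^*\otimes W\cong\mathbb{C}^4$ and $C=W^*\otimes U\cong\mathbb{C}^{2m}$. Then the border rank of $T_{BCLRS,2}$ equals $5$, and for every $m>2$ the border rank of $T_{BCLRS,m}$ is at least $3m-2$.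
   Context: A tensor in $A\otimes B\otimes C$ has rank one if it is of the form $a\otimes b\otimes c$ with $a,b,c$ nonzero. The border rank of a tensor $T$ is the smallest $r$ such that $T$ is a limit of tensors that are sums of at most $r$ rank one tensors. *)

From mathcomp Require Import all_boot all_algebra complex.
From mathcomp Require Import reals.
Set Implicit Arguments.
Unset Strict Implicit.
Unset Printing Implicit Defensive.
Import GRing.Theory Num.Theory.
Local Open Scope ring_scope.
Local Open Scope complex_scope.

Section Tensors.
Variable R : realType.
Local Notation C := R[i].

(* A tensor in A (x) B (x) C, given by its coordinates in fixed bases of
   A, B, C indexed by finite types IA, IB, IC. *)
Definition tensor (IA IB IC : finType) := IA -> IB -> IC -> C.

Definition rank_le (IA IB IC : finType) (T : tensor IA IB IC) (r : nat) :=
  exists (a : 'I_r -> IA -> C) (b : 'I_r -> IB -> C) (c : 'I_r -> IC -> C),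
    forall x y z, T x y z = \sum_(l < r) a l x * b l y * c l z.

(* Convergence of a sequence of tensors (Euclidean topology: coordinatewise,
   with respect to the complex modulus). *)
Definition tensor_cvg (IA IB IC : finType) (Tn : nat -> tensor IA IB IC)
    (T : tensor IA IB IC) :=
  forall eps : R, 0 < eps -> exists N : nat, forall n : nat, (N <= n)%N ->
    forall x y z, `|Tn n x y z - T x y z| < eps%:C.

Definition border_rank_le (IA IB IC : finType) (T : tensor IA IB IC) (r : nat) :=
  exists Tn : nat -> tensor IA IB IC,
    (forall n, rank_le (Tn n) r) /\ tensor_cvg Tn T.

Definition is_border_rank (IA IB IC : finType) (T : tensor IA IB IC) (r : nat) :=
  border_rank_le T r /\ forall r', border_rank_le T r' -> (r <= r')%N.

(* Index sets: x^i_j indexed by (i,j) : 'I_m * 'I_2,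
   y^j_k by (j,k) : 'I_2 * 'I_2, z^k_i by (k,i) : 'I_2 * 'I_m.
   (Indices are 0-based: the paper's index 1 is 0 here.) *)
Notation idxX m := ('I_m * 'I_2)%type.
Notation idxY := ('I_2 * 'I_2)%type.
Notation idxZ m := ('I_2 * 'I_m)%type.

(* Basis of A: the x^i_j with (i,j) <> (1,1) (0-based: (0,0)). *)
Definition notX11 (m : nat) (p : idxX m) : bool :=
  ((nat_of_ord p.1, nat_of_ord p.2) != (0%N, 0%N)).
Notation idxA m := {p : idxX m | @notX11 m p}.

Definition Mmm22 (m : nat) : tensor (idxX m) (idxY)
    (idxZ m) :=
  fun x y z =>
    \sum_(k < 2) \sum_(j < 2) \sum_(i < m)
      ((x == (i, j)) && (y == (j, k)) && (z == (k, i)))%:R.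

(* The correction term x^1_1 (x) (y^1_1 (x) z^1_1 + y^1_2 (x) z^2_1). *)
Definition corrBCLRS (m : nat) : tensor (idxX m) (idxY)
    (idxZ m) :=
  fun x y z =>
    ((nat_of_ord x.1 == 0%N) && (nat_of_ord x.2 == 0%N))%:R *
      (((nat_of_ord y.1 == 0%N) && (nat_of_ord y.2 == 0%N))%:R *
         ((nat_of_ord z.1 == 0%N) && (nat_of_ord z.2 == 0%N))%:R
     + ((nat_of_ord y.1 == 0%N) && (nat_of_ord y.2 == 1%N))%:R *
         ((nat_of_ord z.1 == 1%N) && (nat_of_ord z.2 == 0%N))%:R).

(* T_{BCLRS,m} = M_<m,2,2> - correction, viewed in A (x) B (x) C where A is
   the span of the x^i_j, (i,j) <> (1,1) (the difference lies in A (x) B (x) C,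
   so it is given by its coordinates on this basis of A). *)
Definition T_BCLRS (m : nat) : tensor (idxA m) (idxY)
    (idxZ m) :=
  fun a y z => @Mmm22 m (val a) y z - @corrBCLRS m (val a) y z.

End Tensors.

Arguments T_BCLRS R m : clear implicits.
Arguments Mmm22 R m : clear implicits.
Arguments corrBCLRS R m : clear implicits.
Arguments notX11 m p : clear implicits.

From mathcomp Require Import all_boot all_algebra complex.
From mathcomp Require Import reals.
From mathcomp Require Import order ring lra zify.
Set Implicit Arguments.
Unset Strict Implicit.
Unset Printing Implicit Defensive.
Import Order.TTheory GRing.Theory Num.Theory.
Local Open Scope ring_scope.

(* Upper bound: Bini's approximate algorithm exhibits T_BCLRS,2 as the limit,
   as t -> 0, of t^-1 times a sum of five rank-one tensors whose factors are
   affine in t.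
   Lower bound: a Koszul flattening.  Project B onto C^3 and take the induced
   map A (x) C^3 -> /\^2 C^3 (x) C.  For a rank-one tensor a (x) b (x) c this
   map factors through wedging with the image of b, a skew-symmetric 3 x 3
   matrix, so it has rank at most 2; since rank is lower semicontinuous,
   border rank r forces rank at most 2r for the flattening of the limit.  For
   T_BCLRS,m the flattening is injective (a triangular elimination), whence
   2r >= 3(2m - 1), i.e. r >= 3m - 1. *)

Local Notation idxA m := {p : ('I_m * 'I_2)%type | notX11 m p}.
Local Notation idxY := ('I_2 * 'I_2)%type.

Local Open Scope complex_scope.

Section ComplexSequences.
Variable R : realType.
Local Notation C := R[i].

(* The modulus as a real number, so that [lra] and [nra] apply to estimates. *)
Definition cnorm (z : C) : R := complex.Re `|z|.

Lemma normcE (z : C) : `|z| = (cnorm z)%:C.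
Proof. by rewrite /cnorm RRe_real // normr_real. Qed.

Lemma cnorm_ge0 z : 0 <= cnorm z.
Proof. by rewrite -lecR -normcE normr_ge0. Qed.

Lemma cnorm_eq0 z : (cnorm z == 0) = (z == 0).
Proof.
by rewrite -[z == 0]normr_eq0 normcE -[0 : C]/((0 : R)%:C) (inj_eq (@complexI R)).
Qed.

Lemma cnormD a b : cnorm (a + b) <= cnorm a + cnorm b.
Proof. by rewrite -lecR rmorphD /= -!normcE ler_normD. Qed.

Lemma cnormM a b : cnorm (a * b) = cnorm a * cnorm b.
Proof. by apply: (@complexI R); rewrite rmorphM /= -!normcE normrM. Qed.

Lemma cnormN a : cnorm (- a) = cnorm a.
Proof. by rewrite /cnorm normrN. Qed.

Definition cvgc (u : nat -> C) (l : C) :=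
  forall e : R, 0 < e -> exists N, forall n, (N <= n)%N -> cnorm (u n - l) < e.

Lemma cvgc_cst c : cvgc (fun _ => c) c.
Proof. by move=> e e0; exists 0%N => n _; rewrite subrr /cnorm normr0. Qed.

Lemma cvgc_eq u v l : (forall n, u n = v n) -> cvgc u l -> cvgc v l.
Proof. by move=> uv hu e /hu[N hN]; exists N => n /hN; rewrite uv. Qed.

Lemma cvgcD u v l k : cvgc u l -> cvgc v k -> cvgc (fun n => u n + v n) (l + k).
Proof.
move=> hu hv e e0; have e2 : 0 < e / 2 by lra.
have [N1 h1] := hu _ e2; have [N2 h2] := hv _ e2.
exists (maxn N1 N2) => n; rewrite geq_max => /andP[/h1 hn1 /h2 hn2].
have -> : u n + v n - (l + k) = (u n - l) + (v n - k) by ring.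
have := cnormD (u n - l) (v n - k); lra.
Qed.

Lemma cvgc_bounded u l : cvgc u l ->
  exists N, forall n, (N <= n)%N -> cnorm (u n) <= cnorm l + 1.
Proof.
move=> /(_ 1 ltr01)[N h]; exists N => n /h.
by have := cnormD (u n - l) l; rewrite subrK; lra.
Qed.

Lemma cvgcM u v l k : cvgc u l -> cvgc v k -> cvgc (fun n => u n * v n) (l * k).
Proof.
move=> hu hv e e0.
have [N0 hb] := cvgc_bounded hu.
have hl := cnorm_ge0 l; have hk := cnorm_ge0 k.
pose el := e / (2 * (cnorm l + 1)); pose ek := e / (2 * (cnorm k + 1)).
have el0 : 0 < el by apply: divr_gt0 => //; lra.
have ek0 : 0 < ek by apply: divr_gt0 => //; lra.
have Hl : (cnorm l + 1) * el = e / 2 by rewrite /el; field; lra.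
have Hk : ek * (cnorm k + 1) = e / 2 by rewrite /ek; field; lra.
have [N1 h1] := hv _ el0; have [N2 h2] := hu _ ek0.
exists (maxn N0 (maxn N1 N2)) => n; rewrite !geq_max => /and3P[/hb B /h1 Dv /h2 Du].
have -> : u n * v n - l * k = u n * (v n - k) + (u n - l) * k by ring.
have := cnormD (u n * (v n - k)) ((u n - l) * k); rewrite !cnormM.
have := cnorm_ge0 (v n - k); have := cnorm_ge0 (u n - l); have := cnorm_ge0 (u n).
nra.
Qed.

Lemma cvgc_sum (I : Type) (s : seq I) (P : pred I) (F : nat -> I -> C) (G : I -> C) :
  (forall i, cvgc (F^~ i) (G i)) ->
  cvgc (fun n => \sum_(i <- s | P i) F n i) (\sum_(i <- s | P i) G i).
Proof.
move=> h; elim: s => [|a s IH].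
  by rewrite big_nil; apply: cvgc_eq (cvgc_cst 0) => n; rewrite big_nil.
rewrite big_cons; case: ifP => Pa.
  by apply: cvgc_eq (cvgcD (h a) IH) => n; rewrite big_cons Pa.
by apply: cvgc_eq IH => n; rewrite big_cons Pa.
Qed.

Lemma cvgc_prod (I : Type) (s : seq I) (P : pred I) (F : nat -> I -> C) (G : I -> C) :
  (forall i, cvgc (F^~ i) (G i)) ->
  cvgc (fun n => \prod_(i <- s | P i) F n i) (\prod_(i <- s | P i) G i).
Proof.
move=> h; elim: s => [|a s IH].
  by rewrite big_nil; apply: cvgc_eq (cvgc_cst 1) => n; rewrite big_nil.
rewrite big_cons; case: ifP => Pa.
  by apply: cvgc_eq (cvgcM (h a) IH) => n; rewrite big_cons Pa.
by apply: cvgc_eq IH => n; rewrite big_cons Pa.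
Qed.

Lemma cvgc_det k (A : nat -> 'M[C]_k) (B : 'M[C]_k) :
  (forall i j, cvgc (fun n => A n i j) (B i j)) -> cvgc (fun n => \det (A n)) (\det B).
Proof.
move=> h; apply: cvgc_sum => s; apply: cvgcM; first exact: cvgc_cst.
by apply: cvgc_prod => i; apply: h.
Qed.

Lemma cvgc_neq0 u l : cvgc u l -> l != 0 -> exists N, forall n, (N <= n)%N -> u n != 0.
Proof.
move=> hu l0; have e0 : 0 < cnorm l by rewrite lt_def cnorm_eq0 l0 cnorm_ge0.
have [N h] := hu _ e0; exists N => n /h; apply: contraTneq => ->.
by rewrite sub0r cnormN ltxx.
Qed.

Lemma cvgc_inv_succ : cvgc (fun n => n.+1%:R^-1) 0.
Proof.
move=> e e0; have he : 0 <= e^-1 by rewrite invr_ge0 ltW.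
exists (Num.bound e^-1) => n hn.
rewrite subr0 /cnorm normfV ger0_norm ?ler0n // -(rmorph_nat (@real_complex R)).
rewrite -rmorphV ?unitfE ?pnatr_eq0 //= -[e]invrK ltf_pV2 ?posrE ?invr_gt0 //.
have := archi_boundP he; have : (Num.bound e^-1)%:R <= n%:R :> R by rewrite ler_nat.
by rewrite -addn1 natrD; lra.
Qed.

Lemma eventually_forall_fin (T : finType) (P : T -> nat -> Prop) :
  (forall t, exists N, forall n, (N <= n)%N -> P t n) ->
  exists N, forall t n, (N <= n)%N -> P t n.
Proof.
move=> h; suff [N hN] : exists N, forall t, t \in enum T -> forall n, (N <= n)%N -> P t n.
  by exists N => t n; apply: hN; rewrite mem_enum.
elim: (enum T) => [|a s [N IH]]; first by exists 0%N.
have [Na ha] := h a; exists (maxn N Na) => t; rewrite in_cons => ht n.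
rewrite geq_max => /andP[hN hNa].
by case/orP: ht => [/eqP-> | /IH]; [apply: ha | apply].
Qed.

Lemma tensor_cvgP (IA IB IC : finType) (Tn : nat -> tensor R IA IB IC) T :
  tensor_cvg Tn T <-> forall x y z, cvgc (fun n => Tn n x y z) (T x y z).
Proof.
split=> [h x y z e /h[N hN] | h e e0].
  by exists N => n /hN /(_ x y z); rewrite normcE ltcR.
have [N hN] := @eventually_forall_fin _
  (fun t n => cnorm (Tn n t.1.1 t.1.2 t.2 - T t.1.1 t.1.2 t.2) < e)
  (fun t => h t.1.1 t.1.2 t.2 e e0).
by exists N => n hn x y z; rewrite normcE ltcR; apply: (hN (x, y, z)).
Qed.

End ComplexSequences.

Lemma det_skew_odd (R : numDomainType) n (A : 'M[R]_n) :
  odd n -> A^T = - A -> \det A = 0.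
Proof.
move=> on skew; apply/eqP; suff : \det A *+ 2 == 0 by rewrite mulrn_eq0.
by rewrite mulr2n addr_eq0 -{1}det_tr skew -scaleN1r detZ -signr_odd on expr1 mulN1r.
Qed.

Lemma mxrank_skew_odd (F : numFieldType) n (A : 'M[F]_n) :
  odd n -> A^T = - A -> (\rank A < n)%N.
Proof.
move=> on skew; rewrite ltn_neqAle rank_leq_row andbT.
by rewrite -/(row_free A) row_free_unit unitmxE det_skew_odd // unitr0.
Qed.

Lemma mxrank_sum_le (F : fieldType) p q (I : Type) (r : seq I) (P : pred I)
    (A : I -> 'M[F]_(p, q)) :
  (\rank (\sum_(i <- r | P i) A i)%R <= \sum_(i <- r | P i) \rank (A i))%N.
Proof.
elim/big_rec2: _ => [|i k B _ IH]; first by rewrite mxrank0.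
by apply: leq_trans (mxrank_add _ _) _; rewrite leq_add2l.
Qed.

Definition finmx (F : Type) (X Y : finType) (M : X -> Y -> F) : 'M[F]_(#|X|, #|Y|) :=
  \matrix_(i, j) M (enum_val i) (enum_val j).

Lemma finmx_rowK (F : fieldType) (X Y : finType) (M : X -> Y -> F) (v : 'rV_#|X|) y :
  (v *m finmx M) 0 (enum_rank y) = \sum_x v 0 (enum_rank x) * M x y.
Proof.
rewrite mxE (reindex (@enum_rank _)) /=; last first.
  by exists enum_val => x _; [rewrite enum_rankK | rewrite enum_valK].
by apply: eq_bigr => x _; rewrite mxE !enum_rankK.
Qed.

(* Strong induction on [rk x]: in column [col x] every row other than [x] is
   killed either by [M] or by the induction hypothesis. *)
Lemma row_free_triangular (F : fieldType) (X Y : finType) (M : X -> Y -> F)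
    (col : X -> Y) (rk : X -> nat) :
  (forall x, M x (col x) != 0) ->
  (forall x x', x' != x -> (rk x <= rk x')%N -> M x' (col x) = 0) ->
  row_free (finmx M).
Proof.
move=> pivot tri; apply: inj_row_free => v vM0.
suff v0 x : v 0 (enum_rank x) = 0.
  by apply/rowP => i; rewrite mxE -(enum_valK i) v0.
have [n] := ubnP (rk x); elim: n x => // n IH x /ltnSE le_xn.
have := finmx_rowK M v (col x); rewrite vM0 mxE (bigD1 x) //= big1 ?addr0.
  by move/esym/eqP; rewrite mulf_eq0 (negbTE (pivot x)) orbF => /eqP.
move=> x' x'x; have [le_xx'|lt_x'x] := leqP (rk x) (rk x').
  by rewrite tri ?mulr0.
by rewrite IH ?mul0r // (leq_trans lt_x'x).
Qed.

Section Limits.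
Variable R : realType.
Local Notation C := R[i].

Lemma cvgc_row_free p q (A : nat -> 'M[C]_(p, q)) B :
  row_free B -> (forall i j, cvgc (fun n => A n i j) (B i j)) ->
  exists n, row_free (A n).
Proof.
move=> /row_freeP[D BD1] AB.
have AD1 i j : cvgc (fun n => (A n *m D) i j) ((1%:M : 'M[C]_p) i j).
  rewrite -BD1 mxE; apply: cvgc_eq (cvgc_sum _ _ (fun k => cvgcM (AB i k) (cvgc_cst _))).
  by move=> n; rewrite mxE.
have det1 : \det (1%:M : 'M[C]_p) != 0 by rewrite det1 oner_neq0.
have [N detN0] := cvgc_neq0 (cvgc_det AD1) det1.
exists N; rewrite /row_free eqn_leq rank_leq_row /=.
have /mxrank_unit rkAD : A N *m D \in unitmx by rewrite unitmxE unitfE detN0.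
by rewrite -{1}rkAD mxrankM_maxl.
Qed.

End Limits.

Definition levi_civita (a b c : nat) : int :=
  match a, b, c with
  | 0, 1, 2 | 1, 2, 0 | 2, 0, 1 => 1
  | 0, 2, 1 | 2, 1, 0 | 1, 0, 2 => -1
  | _, _, _ => 0
  end.

Lemma levi_civitaC a b c : levi_civita a b c = - levi_civita a c b.
Proof. by case: a => [|[|[|a]]]; case: b => [|[|[|b]]]; case: c => [|[|[|c]]]. Qed.

Section KoszulFlattening.
Variables (R : realType) (IA IB IC : finType) (proj : IB -> 'I_3).
Local Notation C := R[i].
Local Notation tensorS := (tensor R IA IB IC).

(* The Koszul flattening A (x) C^3 -> /\^2 C^3 (x) C of the image of S under
   the coordinate projection [proj] of B onto C^3, with /\^2 C^3 identified
   with C^3 through the Levi-Civita symbol. *)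
Definition koszul (S : tensorS) (x : IA * 'I_3) (w : 'I_3 * IC) : C :=
  \sum_y S x.1 y w.2 * (levi_civita (proj y) x.2 w.1)%:~R.

Definition wedge_mx (b : IB -> C) : 'M[C]_3 :=
  \matrix_(be, ga) \sum_y b y * (levi_civita (proj y) be ga)%:~R.

Lemma wedge_mx_skew b : (wedge_mx b)^T = - wedge_mx b.
Proof.
apply/matrixP => be ga; rewrite !mxE -sumrN; apply: eq_bigr => y _.
by rewrite levi_civitaC intrN mulrN.
Qed.

Lemma koszul_rank1 (a : IA -> C) (b : IB -> C) (c : IC -> C) :
  (\rank (finmx (koszul (fun x y z => (a x * b y * c z)%R))) <= 2)%N.
Proof.
pose Amx : 'M[C]_(#|{: IA * 'I_3}|, 3) :=
  \matrix_(i, be) (a (enum_val i).1 * ((enum_val i).2 == be)%:R).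
pose Cmx : 'M[C]_(3, #|{: 'I_3 * IC}|) :=
  \matrix_(ga, j) (((enum_val j).1 == ga)%:R * c (enum_val j).2).
have -> : finmx (koszul (fun x y z => (a x * b y * c z)%R)) = Amx *m wedge_mx b *m Cmx.
  apply/matrixP => i j; rewrite /Amx /Cmx !mxE.
  rewrite (bigD1 (enum_val j).1) //= big1 => [|ga /negbTE ga_j].
    rewrite !mxE eqxx mul1r addr0 (bigD1 (enum_val i).2) //= big1 => [|be /negbTE be_i].
      by rewrite !mxE eqxx mulr1 addr0 mulr_sumr mulr_suml; apply: eq_bigr => y _; ring.
    by rewrite !mxE eq_sym be_i mulr0 mul0r.
  by rewrite !mxE eq_sym ga_j mul0r mulr0.
apply: leq_trans (mxrankM_maxl _ _) _; apply: leq_trans (mxrankM_maxr _ _) _.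
exact: mxrank_skew_odd (wedge_mx_skew b).
Qed.

Lemma koszul_rank_le S r : rank_le S r -> (\rank (finmx (koszul S)) <= 2 * r)%N.
Proof.
case=> a [b [c Sabc]].
have -> : finmx (koszul S) =
    \sum_(l < r) finmx (koszul (fun x y z => (a l x * b l y * c l z)%R)).
  apply/matrixP => i j; rewrite summxE !mxE.
  rewrite /koszul; under eq_bigr do rewrite Sabc mulr_suml.
  by rewrite exchange_big; apply: eq_bigr => l _; rewrite mxE.
apply: leq_trans (mxrank_sum_le _ _ _) _.
apply: (@leq_trans (\sum_(l < r) 2)%N); first by apply: leq_sum => l _; apply: koszul_rank1.
by rewrite sum_nat_const card_ord mulnC.
Qed.

Lemma koszul_border_rank_le S r :
  row_free (finmx (koszul S)) -> border_rank_le S r -> (3 * #|IA| <= 2 * r)%N.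
Proof.
move=> Sfree [Tn [Tn_rk /tensor_cvgP Tn_cvg]].
have [|n Tn_free] := @cvgc_row_free R _ _ (fun n => finmx (koszul (Tn n))) _ Sfree.
  move=> i j; rewrite mxE; apply: cvgc_eq (cvgc_sum _ _ (fun y =>
    cvgcM (Tn_cvg _ y _) (cvgc_cst _))) => n; by rewrite mxE.
have <- : #|{: IA * 'I_3}| = (3 * #|IA|)%N by rewrite card_prod card_ord mulnC.
move/eqP: Tn_free <-.
exact: koszul_rank_le.
Qed.

End KoszulFlattening.

(* Row (j, be) of the Koszul flattening of T_BCLRS pivots at column (ga, k):
   ga completes {2 - j - k, be} to {0, 1, 2}, and the rows with be = 1 are
   eliminated last. *)
Lemma bclrs_pivots (j be j' be' : nat) :
  (j < 2)%N -> (be < 3)%N -> (j' < 2)%N -> (be' < 3)%N ->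
  let k := (1 < j + be)%N in let ga := (3 - (2 - j - k) - be)%N in
  [/\ (ga < 3)%N, levi_civita (2 - j - k) be ga != 0 &
      (j', be') != (j, be) -> ((be == 1) <= (be' == 1))%N ->
      levi_civita (2 - j' - k) be' ga = 0].
Proof.
by case: j => [|[|]] // _; case: be => [|[|[|]]] // _;
   case: j' => [|[|]] // _; case: be' => [|[|[|]]].
Qed.

Section BCLRS.
Variables (R : realType) (m : nat).
Local Notation C := R[i].

Lemma Mmm22E x y z : Mmm22 R m x y z = ((y == (x.2, z.1)) && (z.2 == x.1))%:R.
Proof.
case: x z => [i0 j0] [k0 i1]; rewrite /Mmm22 /=.
rewrite (bigD1 k0) //= [X in _ + X]big1 => [|k /negbTE kk0]; last first.
  by do 2!apply: big1 => ? _; rewrite !xpair_eqE (eq_sym k0) kk0 !andbF.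
rewrite addr0 (bigD1 j0) //= [X in _ + X]big1 => [|j /negbTE jj0]; last first.
  by apply: big1 => ? _; rewrite !xpair_eqE (eq_sym j0) jj0 andbF.
rewrite addr0 (bigD1 i0) //= [X in _ + X]big1 => [|i /negbTE ii0]; last first.
  by rewrite !xpair_eqE (eq_sym i0) ii0.
by rewrite addr0 !xpair_eqE !eqxx andbT.
Qed.

Lemma corrBCLRS_off_x11 (a : idxA m) y z : corrBCLRS R m (val a) y z = 0.
Proof.
case: a => [[i j] /=]; rewrite /notX11 /corrBCLRS xpair_eqE negb_and /=.
by case/orP=> /negbTE->; rewrite ?andbF mul0r.
Qed.

Lemma T_BCLRSE (a : idxA m) y z :
  T_BCLRS R m a y z = ((y == ((val a).2, z.1)) && (z.2 == (val a).1))%:R.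
Proof. by rewrite /T_BCLRS Mmm22E corrBCLRS_off_x11 subr0. Qed.

(* B -> C^3 sending y^j_k to e_(2-j-k); it identifies y^0_1 with y^1_0. *)
Definition bclrs_proj (y : idxY) : 'I_3 := inord (2 - y.1 - y.2).

Lemma koszul_T_BCLRSE x w :
  koszul bclrs_proj (T_BCLRS R m) x w =
  (w.2.2 == (val x.1).1)%:R * (levi_civita (2 - (val x.1).2 - w.2.1) x.2 w.1)%:~R.
Proof.
rewrite /koszul (bigD1 ((val x.1).2, w.2.1)) //= big1 => [|y /negbTE yx]; last first.
  by rewrite T_BCLRSE yx mul0r.
by rewrite T_BCLRSE eqxx addr0 /bclrs_proj inordK //; lia.
Qed.

Lemma bclrs_row_eq (x x' : idxA m * 'I_3) : (val x'.1).1 = (val x.1).1 ->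
  nat_of_ord (val x'.1).2 = (val x.1).2 -> nat_of_ord x'.2 = x.2 -> x' = x.
Proof.
case: x x' => [[[i j] ?] b] [[[i' j'] ?] b'] /= ii' /ord_inj jj' /ord_inj bb'.
by rewrite bb'; congr (_, _); apply: val_inj; rewrite /= ii' jj'.
Qed.

Lemma koszul_T_BCLRS_row_free : row_free (finmx (koszul bclrs_proj (T_BCLRS R m))).
Proof.
pose k (x : idxA m * 'I_3) : nat := (1 < (val x.1).2 + x.2)%N.
pose ga (x : idxA m * 'I_3) : nat := (3 - (2 - (val x.1).2 - k x) - x.2)%N.
have piv (x x' : idxA m * 'I_3) := bclrs_pivots (ltn_ord (val x.1).2) (ltn_ord x.2)
  (ltn_ord (val x'.1).2) (ltn_ord x'.2).
apply: (@row_free_triangular _ _ _ _ (fun x => (inord (ga x), (inord (k x), (val x.1).1)))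
  (fun x => nat_of_bool (nat_of_ord x.2 == 1%N))) => [x | x x' x'x rk_le].
  have [ga3 nz _] := piv x x.
  rewrite koszul_T_BCLRSE /= eqxx mul1r !inordK ?intr_eq0 //; exact: leq_b1.
rewrite koszul_T_BCLRSE /=; have [ii'|_] := eqP; last by rewrite mul0r.
have [ga3 _ piv3] := piv x x'; rewrite !inordK //; last exact: leq_b1.
rewrite piv3 ?mulr0 //; apply: contraNneq x'x => -[jj' bb'].
by apply/eqP/bclrs_row_eq.
Qed.

End BCLRS.

Definition cubic_coef (a0 a1 b0 b1 c0 c1 : int) (e : nat) : int :=
  match e with
  | 0 => a0 * b0 * c0
  | 1 => a1 * b0 * c0 + a0 * b1 * c0 + a0 * b0 * c1
  | 2 => a1 * b1 * c0 + a1 * b0 * c1 + a0 * b1 * c1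
  | _ => a1 * b1 * c1
  end.

Lemma cubic_coefE (F : comPzRingType) (t : F) a0 a1 b0 b1 c0 c1 :
  (a0%:~R + t * a1%:~R) * (b0%:~R + t * b1%:~R) * (c0%:~R + t * c1%:~R) =
  \sum_(e < 4) t ^+ e * (cubic_coef a0 a1 b0 b1 c0 c1 e)%:~R.
Proof. by rewrite !big_ord_recr big_ord0 /= !(intrD, intrM); ring. Qed.

(* Bini's approximate algorithm: the l-th factors are [a0 + t a1], [b0 + t b1],
   [c0 + t c1] on the coordinates x^i_j, y^j_k, z^k_i. *)
Definition bini_a0 (l i j : nat) : int :=
  match l, i, j with
  | 0, 1, 0 | 1, 0, 1 | 4, 1, 0 | 4, 0, 1 => 1
  | 2, 1, 0 | 3, 0, 1 => -1
  | _, _, _ => 0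
  end.
Definition bini_a1 (l i j : nat) : int :=
  match l, i, j with
  | 0, 1, 1 | 1, 1, 1 => 1
  | _, _, _ => 0
  end.
Definition bini_b0 (l j k : nat) : int :=
  match l, j, k with
  | 0, 1, 0 | 1, 1, 1 | 2, 1, 0 | 3, 1, 1 | 3, 1, 0 | 4, 1, 0 => 1
  | _, _, _ => 0
  end.
Definition bini_b1 (l j k : nat) : int :=
  match l, j, k with
  | 0, 0, 0 | 3, 0, 1 | 4, 0, 1 => 1
  | _, _, _ => 0
  end.
Definition bini_c0 (l k i : nat) : int :=
  match l, k, i with
  | 0, 0, 1 | 1, 1, 1 | 2, 1, 1 | 2, 0, 1 | 3, 1, 1 | 4, 1, 1 => 1
  | _, _, _ => 0
  end.
Definition bini_c1 (l k i : nat) : int :=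
  match l, k, i with
  | 1, 1, 0 | 2, 0, 0 | 4, 0, 0 => 1
  | _, _, _ => 0
  end.

Definition bini_coef (i j j' k k' i' e : nat) : int :=
  \sum_(l < 5) cubic_coef (bini_a0 l i j) (bini_a1 l i j) (bini_b0 l j' k)
    (bini_b1 l j' k) (bini_c0 l k' i') (bini_c1 l k' i') e.

Lemma bini_coef01 (i j j' k k' i' : nat) :
  (i < 2)%N -> (j < 2)%N -> (j' < 2)%N -> (k < 2)%N -> (k' < 2)%N -> (i' < 2)%N ->
  (i, j) != (0, 0)%N ->
  bini_coef i j j' k k' i' 0 = 0 /\
  bini_coef i j j' k k' i' 1 = ((j' == j) && (k == k') && (i' == i) : nat).
Proof.
rewrite /bini_coef !big_ord_recr !big_ord0 /=.
by case: i => [|[|]] //; case: j => [|[|]] //; case: j' => [|[|]] //;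
  case: k => [|[|]] //; case: k' => [|[|]] //; case: i' => [|[|]].
Qed.

Section Bini.
Variable R : realType.
Local Notation C := R[i].

Definition bini_seq (n : nat) : tensor R (idxA 2) idxY idxY :=
  let t : C := n.+1%:R^-1 in
  fun x y z => \sum_(l < 5)
    (t^-1 * ((bini_a0 l (val x).1 (val x).2)%:~R + t * (bini_a1 l (val x).1 (val x).2)%:~R)) *
    ((bini_b0 l y.1 y.2)%:~R + t * (bini_b1 l y.1 y.2)%:~R) *
    ((bini_c0 l z.1 z.2)%:~R + t * (bini_c1 l z.1 z.2)%:~R).

Lemma bini_seqE n x y z : let t : C := n.+1%:R^-1 in
  bini_seq n x y z = T_BCLRS R 2 x y z
    + t * (bini_coef (val x).1 (val x).2 y.1 y.2 z.1 z.2 2)%:~R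
    + t ^+ 2 * (bini_coef (val x).1 (val x).2 y.1 y.2 z.1 z.2 3)%:~R.
Proof.
move=> t; have [c0 c1] : bini_coef (val x).1 (val x).2 y.1 y.2 z.1 z.2 0 = 0 /\
    (bini_coef (val x).1 (val x).2 y.1 y.2 z.1 z.2 1)%:~R = T_BCLRS R 2 x y z.
  case: x => [[x1 x2] x11]; case: y => y1 y2; case: z => z1 z2.
  have [-> ->] := bini_coef01 (ltn_ord x1) (ltn_ord x2) (ltn_ord y1) (ltn_ord y2)
    (ltn_ord z1) (ltn_ord z2) x11.
  by rewrite T_BCLRSE /= !xpair_eqE.
rewrite /bini_seq -/t.
under eq_bigr do rewrite -mulrA -mulrA (mulrA (_%:~R + _)) cubic_coefE.
rewrite -mulr_sumr exchange_big /=.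
under eq_bigr do rewrite -mulr_sumr -rmorph_sum /=.
rewrite 4!big_ord_recr big_ord0 /= -/(bini_coef _ _ _ _ _ _ 0) -/(bini_coef _ _ _ _ _ _ 1).
rewrite -/(bini_coef _ _ _ _ _ _ 2) -/(bini_coef _ _ _ _ _ _ 3) c0 c1.
have t0 : t != 0 by rewrite invr_eq0 pnatr_eq0.
by field.
Qed.

Lemma bini_border_rank_le : border_rank_le (T_BCLRS R 2) 5.
Proof.
exists bini_seq; split=> [n|]; first by do 3!eexists.
apply/tensor_cvgP => x y z; apply: cvgc_eq (fun n => esym (bini_seqE n x y z)) _.
set c2 : C := _%:~R; set c3 : C := _%:~R.
have := cvgcD (cvgcD (cvgc_cst (T_BCLRS R 2 x y z)) (cvgcM (@cvgc_inv_succ R) (cvgc_cst c2)))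
  (cvgcM (cvgcM (@cvgc_inv_succ R) (@cvgc_inv_succ R)) (cvgc_cst c3)).
by rewrite !mul0r !addr0; apply: cvgc_eq => n; rewrite expr2.
Qed.

End Bini.

Lemma card_idxA m : (0 < m)%N -> #|{: idxA m}| = (2 * m - 1)%N.
Proof.
move=> m_gt0; rewrite card_sig (eq_card (B := predC1 (Ordinal m_gt0, ord0))).
  by rewrite cardC1 card_prod !card_ord mulnC subn1.
by case.
Qed.

Lemma T_BCLRS_border_rank_ge (R : realType) m r : (0 < m)%N ->
  border_rank_le (T_BCLRS R m) r -> (3 * (2 * m - 1) <= 2 * r)%N.
Proof.
move=> m_gt0; rewrite -card_idxA //; apply: koszul_border_rank_le.
exact: koszul_T_BCLRS_row_free.
Qed.

Theorem mainTheorem1 (R : realType) :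
  is_border_rank (T_BCLRS R 2) 5 /\
  (forall m : nat, (2 < m)%N ->
     forall r : nat, border_rank_le (T_BCLRS R m) r -> (3 * m - 2 <= r)%N).
Proof.
split; first split; first exact: bini_border_rank_le.
  by move=> r /(T_BCLRS_border_rank_ge (isT : 0 < 2)%N); lia.
by move=> m m_gt2 r /T_BCLRS_border_rank_ge; lia.
Qed.
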